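(* Fix one of the two variants $\sharp\in\{\text{lumped},\text{exact}\}$ described in the context, let $\vec X^m\in\underline V^h_{\partial_0}$ satisfy assumption $(\mathfrak A)$, and let $\Delta t_m>0$. (i) If $(\delta\vec X^{m+1},\kappa^{m+1})\in\underline V^h_\partial\times W_\sharp$ satisfies, with $\vec X^{m+1}=\vec X^m+\delta\vec X^{m+1}$, $$\Big(\vec X^m\cdot\vec e_1\,\tfrac{\vec X^{m+1}-\vec X^m}{\Delta t_m},\chi\,\vec\nu^m|\vec X^m_\rho|\Big)_\sharp=\Big(\vec X^m\cdot\vec e_1\,\kappa^{m+1},\chi|\vec X^m_\rho|\Big)_\sharp\quad\forall\chi\in W_\sharp,$$ $$\Big(\vec X^m\cdot\vec e_1\,\kappa^{m+1}\vec\nu^m,\vec\eta\,|\vec X^m_\rho|\Big)_\sharp+\big(\vec\eta\cdot\vec e_1,|\vec X^{m+1}_\rho|\big)+\Big((\vec X^m\cdot\vec e_1)\vec X^{m+1}_\rho,\vec\eta_\rho|\vec X^m_\rho|^{-1}\Big)=B^m(\vec\eta)\quad\forall\vec\eta\in\underline V^h_\partial,$$ then $E(\vec X^{m+1})+2\pi\Delta t_m\big(\vec X^m\cdot\vec e_1\,|\kappa^{m+1}|^2,|\vec X^m_\rho|\big)_\sharp\le E(\vec X^m)$. (ii) If $(\delta\vec X^{m+1},\vec\kappa^{m+1})\in\underline V^h_\partial\times[W_\sharp]^2$ satisfies, with $\vec X^{m+1}=\vec X^m+\delta\vec X^{m+1}$, $$\Big(\vec X^m\cdot\vec e_1\,\tfrac{\vec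 X^{m+1}-\vec X^m}{\Delta t_m},\vec\chi\,|\vec X^m_\rho|\Big)_\sharp=\Big((\vec X^m\cdot\vec e_1)\vec\kappa^{m+1},\vec\chi|\vec X^m_\rho|\Big)_\sharp\quad\forall\vec\chi\in[W_\sharp]^2,$$ $$\Big((\vec X^m\cdot\vec e_1)\vec\kappa^{m+1},\vec\eta\,|\vec X^m_\rho|\Big)_\sharp+\big(\vec\eta\cdot\vec e_1,|\vec X^{m+1}_\rho|\big)+\Big((\vec X^m\cdot\vec e_1)\vec X^{m+1}_\rho,\vec\eta_\rho|\vec X^m_\rho|^{-1}\Big)=B^m(\vec\eta)\quad\forall\vec\eta\in\underline V^h_\partial,$$ then $E(\vec X^{m+1})+2\pi\Delta t_m\big(\vec X^m\cdot\vec e_1\,|\vec\kappa^{m+1}|^2,|\vec X^m_\rho|\big)_\sharp\le E(\vec X^m)$.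
   Context: Setup. $\vec e_1=(1,0)^T$, $\vec e_2=(0,1)^T$; ''$\cdot$'' is the Euclidean inner product; $[r]_+=\max\{r,0\}$, $[r]_-=-\max\{-r,0\}$. $I$ is either the periodic interval $\mathbb R/\mathbb Z$ (with $\partial I=\emptyset$) or $I=(0,1)$ (with $\partial I=\{0,1\}$). $\partial I=\partial_DI\cup\partial_0I\cup\partial_1I\cup\partial_2I$ is a given disjoint partition, and $\widehat\varrho^{(p)}\in\mathbb R$, $p\in\{0,1\}$, are given constants with $|\widehat\varrho^{(p)}|\le1$. Let $J\ge3$, $h=1/J$, $q_j=jh$ ($j=0,\dots,J$; $q_0=q_J$ identified in the periodic case). $V^h$ is the space of continuous functions on $\overline I$ (periodic if $I=\mathbb R/\mathbb Z$) that are affine on each $[q_{j-1},q_j]$; $\underline V^h=[V^h]^2$; $\underline V^h_{\partial_0}=\{\vec\eta\in\underline V^h:\vec\eta(\rho)\cdot\vec e_1=0\ \forall\rho\in\partial_0I\}$; $\underline V^h_\partial=\{\vec\eta\in\underline V^h_{\partial_0}:\vec\eta(\rho)\cdot\vec e_i=0\ \forall\rho\in\partial_iI,\ i=1,2;\ \vec\eta(\rho)=\vec0\ \forall\rho\in\partial_DI\}$; $W^h_{\partial_0}=\{\chi\in V^h:\chi(\rho)=0\ \forall\rho\in\partial_0I\}$. $(\cdot,\cdot)$ is the $L^2(I)$ inner product (with dot product for vector functions), and for piecewise continuous $f,g$ the mass-lumped product is $(f,g)^h=\tfrac h2\sum_{j=1}^J[(fg)(q_j^-)+(fg)(q_{j-1}^+)]$.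 Two variants: in the ''lumped'' variant $(\cdot,\cdot)_\sharp=(\cdot,\cdot)^h$ and $W_\sharp=W^h_{\partial_0}$; in the ''exact'' variant $(\cdot,\cdot)_\sharp=(\cdot,\cdot)$ and $W_\sharp=V^h$. For $\vec X^m$ with $|\vec X^m_\rho|>0$ a.e., $\vec\nu^m=-[\vec X^m_\rho]^\perp/|\vec X^m_\rho|$ with $(a,b)^\perp=(b,-a)$. Assumption $(\mathfrak A)$: $|\vec X^m_\rho|>0$ a.e. on $I$ and $\vec X^m(\rho)\cdot\vec e_1>0$ for all $\rho\in\overline I\setminus\partial_0I$. The boundary functional is $B^m(\vec\eta)=-\sum_{p\in\partial_1I}\widehat\varrho^{(p)}(\vec X^m(p)\cdot\vec e_1)\vec\eta(p)\cdot\vec e_2-\sum_{p\in\partial_2I}\big(([\widehat\varrho^{(p)}]_+\vec X^{m+1}(p)+[\widehat\varrho^{(p)}]_-\vec X^m(p))\cdot\vec e_1\big)\vec\eta(p)\cdot\vec e_1$. The discrete energy of $\vec X\in\underline V^h$ is $E(\vec X)=2\pi(\vec X\cdot\vec e_1,|\vec X_\rho|)+2\pi\sum_{p\in\partial_1I}\widehat\varrho^{(p)}(\vec X(p)\cdot\vec e_1)(\vec X(p)\cdot\vec e_2)+\pi\sum_{p\in\partial_2I}\widehat\varrho^{(p)}(\vec X(p)\cdot\vec e_1)^2$. *)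

From Stdlib Require Import Reals Lra List ClassicalEpsilon.
Import ListNotations.
Open Scope R_scope.

(** Vectors in R^2; e1-component = fst, e2-component = snd. *)
Definition Vec := (R * R)%type.
Definition vdot (u w : Vec) : R := fst u * fst w + snd u * snd w.
Definition vnorm (u : Vec) : R := sqrt (vdot u u).
Definition vadd (u w : Vec) : Vec := (fst u + fst w, snd u + snd w).
Definition vsub (u w : Vec) : Vec := (fst u - fst w, snd u - snd w).
Definition vscal (a : R) (u : Vec) : Vec := (a * fst u, a * snd u).
Definition vperp (u : Vec) : Vec := (snd u, - fst u).

Definition posp (r : R) : R := Rmax r 0.
Definition negp (r : R) : R := - Rmax (- r) 0.

Definition hh (J : nat) : R := 1 / INR J.
Definition qn (J j : nat) : R := INR j * hh J.

(** A function of V^h is represented by its nodal values c 0, ..., c J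
    (values at indices > J are irrelevant).  In the periodic case
    (per = true) the nodes q_0 and q_J are identified: c J = c 0. *)
Definition inVh (per : bool) (J : nat) (c : nat -> R) : Prop :=
  per = true -> c J = c O.

(** Restriction to the element [q_{j-1}, q_j] (1 <= j <= J) of the
    piecewise affine function with nodal values c. *)
Definition ev (J : nat) (c : nat -> R) (j : nat) (rho : R) : R :=
  c (j - 1)%nat + (c j - c (j - 1)%nat) * (rho - qn J (j - 1)) / hh J.
Definition der (J : nat) (c : nat -> R) (j : nat) : R :=
  (c j - c (j - 1)%nat) / hh J.

Definition comp1 (X : nat -> Vec) : nat -> R := fun k => fst (X k).
Definition comp2 (X : nat -> Vec) : nat -> R := fun k => snd (X k).
Definition evV (J : nat) (X : nat -> Vec) (j : nat) (rho : R) : Vec :=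
  (ev J (comp1 X) j rho, ev J (comp2 X) j rho).
Definition derV (J : nat) (X : nat -> Vec) (j : nat) : Vec :=
  (der J (comp1 X) j, der J (comp2 X) j).
Definition inVhV (per : bool) (J : nat) (X : nat -> Vec) : Prop :=
  inVh per J (comp1 X) /\ inVh per J (comp2 X).

Definition nuV (J : nat) (X : nat -> Vec) (j : nat) : Vec :=
  vscal (- / vnorm (derV J X j)) (vperp (derV J X j)).

(** Boundary: endpoints indexed by bool (false = 0, true = 1). *)
Inductive BC := BD | B0 | B1 | B2.
Definition BC_eqb (a b : BC) : bool :=
  match a, b with
  | BD, BD | B0, B0 | B1, B1 | B2, B2 => true
  | _, _ => false
  end.
Definition node (J : nat) (p : bool) : nat := if p then J else O.
Definition ptR (p : bool) : R := if p then 1 else 0.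
(** p belongs to d_k I (the boundary is empty in the periodic case) *)
Definition inBd (per : bool) (bc : bool -> BC) (k : BC) (p : bool) : bool :=
  negb per && BC_eqb (bc p) k.
Definition bsum (f : bool -> R) : R := f false + f true.
Definition bsumIn (per : bool) (bc : bool -> BC) (k : BC) (f : bool -> R) : R :=
  bsum (fun p => if inBd per bc k p then f p else 0).

Definition inV0 per bc J (X : nat -> Vec) : Prop :=
  inVhV per J X /\
  forall p, inBd per bc B0 p = true -> fst (X (node J p)) = 0.
Definition inVpart per bc J (X : nat -> Vec) : Prop :=
  inV0 per bc J X /\
  (forall p, inBd per bc B1 p = true -> fst (X (node J p)) = 0) /\
  (forall p, inBd per bc B2 p = true -> snd (X (node J p)) = 0) /\
  (forall p, inBd per bc BD p = true -> X (node J p) = (0, 0)).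
Definition inW0 per bc J (c : nat -> R) : Prop :=
  inVh per J c /\ forall p, inBd per bc B0 p = true -> c (node J p) = 0.

Inductive variant := Lumped | Exact.
Definition inWs (v : variant) per bc J (c : nat -> R) : Prop :=
  match v with
  | Lumped => inW0 per bc J c
  | Exact => inVh per J c
  end.

(** The exact Riemann integral of f over [a,b] (chosen
    classically; it is the Riemann integral whenever f is integrable,
    which is the case for all the polynomial integrands used below). *)
Definition Rint (f : R -> R) (a b : R) : R :=
  epsilon (inhabits 0)
    (fun v => exists pr : Riemann_integrable f a b, RiemannInt pr = v).

Definition sumj (J : nat) (f : nat -> R) : R :=
  fold_right Rplus 0 (map f (seq 1 J)).

(** A piecewise continuous integrand (e.g. the pointwise product f g) is
    given elementwise: F j is its restriction to [q_{j-1}, q_j].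
    ip_exact J F = (f, g) = int_I f g ;
    ip_lumped J F = (f, g)^h = h/2 sum_j [(fg)(q_j^-) + (fg)(q_{j-1}^+)]. *)
Definition ip_exact (J : nat) (F : nat -> R -> R) : R :=
  sumj J (fun j => Rint (F j) (qn J (j - 1)) (qn J j)).
Definition ip_lumped (J : nat) (F : nat -> R -> R) : R :=
  hh J / 2 * sumj J (fun j => F j (qn J j) + F j (qn J (j - 1))).
Definition ip_sharp (v : variant) J F : R :=
  match v with Lumped => ip_lumped J F | Exact => ip_exact J F end.

Definition isB0pt (per : bool) (bc : bool -> BC) (rho : R) : Prop :=
  exists p, inBd per bc B0 p = true /\ rho = ptR p.
Definition assumptionA per bc J (X : nat -> Vec) : Prop :=
  (forall j, (1 <= j <= J)%nat -> vnorm (derV J X j) > 0) /\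
  (forall j rho, (1 <= j <= J)%nat -> qn J (j - 1) <= rho <= qn J j ->
     ~ isB0pt per bc rho -> fst (evV J X j rho) > 0).

Definition Bm per bc (rhat : bool -> R) J (Xm Xnew eta : nat -> Vec) : R :=
  - bsumIn per bc B1 (fun p =>
        rhat p * fst (Xm (node J p)) * snd (eta (node J p)))
  - bsumIn per bc B2 (fun p =>
        (posp (rhat p) * fst (Xnew (node J p))
         + negp (rhat p) * fst (Xm (node J p))) * fst (eta (node J p))).

Definition energy per bc (rhat : bool -> R) J (X : nat -> Vec) : R :=
  2 * PI * ip_exact J (fun j rho => fst (evV J X j rho) * vnorm (derV J X j))
  + 2 * PI * bsumIn per bc B1 (fun p =>
        rhat p * fst (X (node J p)) * snd (X (node J p)))
  + PI * bsumIn per bc B2 (fun p => rhat p * (fst (X (node J p))) ^ 2).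

(** The common second equation's extra terms:
    (eta.e1, |X^{m+1}_rho|) + ((X^m.e1) X^{m+1}_rho, eta_rho |X^m_rho|^{-1}) *)
Definition stiff J (Xm Xnew eta : nat -> Vec) : R :=
  ip_exact J (fun j rho => fst (evV J eta j rho) * vnorm (derV J Xnew j))
  + ip_exact J (fun j rho => fst (evV J Xm j rho) *
        vdot (derV J Xnew j) (derV J eta j) / vnorm (derV J Xm j)).

From Pilot Require Import Defs.
From Stdlib Require Import Reals Lra Lia List ClassicalEpsilon FunctionalExtensionality.
Open Scope R_scope.

(* Testing the first equation with the curvature and the second with
   eta = dX^{m+1} gives dt (x kappa^2, |X_rho|)_# + stiff(dX) = B^m(dX),
   where x = X^m.e1 >= 0.  Since |b| (|a| - |b|) <= a.(a - b) by
   Cauchy-Schwarz, the stiffness terms dominate the increment of the area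
   integral (X.e1, |X_rho|).  The boundary part of the energy matches B^m
   exactly on d_1 I, where dX.e1 = 0, and decreases on d_2 I because
   [rhat]_+ X^{m+1} + [rhat]_- X^m is a convex-concave splitting of the
   derivative of rhat (X.e1)^2 / 2. *)

Lemma Rint_RiemannInt f a b (pr : Riemann_integrable f a b) : Rint f a b = RiemannInt pr.
Proof.
  unfold Rint.
  destruct (epsilon_spec (inhabits 0) (fun v => exists pr, RiemannInt pr = v)
              (ex_intro _ _ (ex_intro _ pr eq_refl))) as [pr' <-].
  apply RiemannInt_P5.
Qed.

Section RintContinuous.

Variables (a b : R).
Hypothesis Hab : a <= b.

Let integrable f : continuity f -> Riemann_integrable f a b :=
  fun Hf => @continuity_implies_RiemannInt f a b Hab (fun x _ => Hf x).

Lemma Rint_plus_scal f g l : continuity f -> continuity g ->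
  Rint (fun x => f x + l * g x) a b = Rint f a b + l * Rint g a b.
Proof.
  intros Hf Hg.
  rewrite (Rint_RiemannInt _ _ _ (RiemannInt_P10 l (integrable f Hf) (integrable g Hg))).
  rewrite (Rint_RiemannInt _ _ _ (integrable f Hf)), (Rint_RiemannInt _ _ _ (integrable g Hg)).
  apply RiemannInt_P13.
Qed.

Lemma Rint_scal f c : continuity f -> Rint (fun x => c * f x) a b = c * Rint f a b.
Proof.
  intros Hf.
  replace (fun x => c * f x) with (fun x => f x + (c - 1) * f x)
    by (apply functional_extensionality; intros; ring).
  rewrite Rint_plus_scal by assumption. ring.
Qed.

Lemma Rint_le f g : continuity f -> continuity g ->
  (forall x, a < x < b -> f x <= g x) -> Rint f a b <= Rint g a b.
Proof.
  intros Hf Hg Hfg.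
  rewrite (Rint_RiemannInt _ _ _ (integrable f Hf)), (Rint_RiemannInt _ _ _ (integrable g Hg)).
  now apply RiemannInt_P19.
Qed.

End RintContinuous.

Lemma sumj_ext J f g : (forall j, (1 <= j <= J)%nat -> f j = g j) -> sumj J f = sumj J g.
Proof.
  unfold sumj. intros Hfg.
  assert (Hin : forall j, In j (seq 1 J) -> f j = g j)
    by (intros j Hj; apply in_seq in Hj; apply Hfg; lia).
  induction (seq 1 J) as [|j l IH]; simpl; [reflexivity|].
  f_equal; [apply Hin; now left | apply IH; intros i Hi; apply Hin; now right].
Qed.

Lemma sumj_le J f g : (forall j, (1 <= j <= J)%nat -> f j <= g j) -> sumj J f <= sumj J g.
Proof.
  unfold sumj. intros Hfg.
  assert (Hin : forall j, In j (seq 1 J) -> f j <= g j)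
    by (intros j Hj; apply in_seq in Hj; apply Hfg; lia).
  induction (seq 1 J) as [|j l IH]; simpl; [lra|].
  apply Rplus_le_compat; [apply Hin; now left | apply IH; intros i Hi; apply Hin; now right].
Qed.

Lemma sumj_plus_scal J f g c : sumj J (fun j => f j + c * g j) = sumj J f + c * sumj J g.
Proof. unfold sumj. induction (seq 1 J); simpl; [ring | rewrite IHl; ring]. Qed.

Lemma sumj_scal J f c : sumj J (fun j => c * f j) = c * sumj J f.
Proof. unfold sumj. induction (seq 1 J); simpl; [ring | rewrite IHl; ring]. Qed.

Lemma hh_gt0 J : (0 < J)%nat -> 0 < hh J.
Proof. intros HJ. unfold hh. apply Rdiv_lt_0_compat; [lra | now apply lt_0_INR]. Qed.

Lemma qn_le J i j : (0 < J)%nat -> (i <= j)%nat -> qn J i <= qn J j.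
Proof.
  intros HJ Hij. unfold qn.
  apply Rmult_le_compat_r; [left; now apply hh_gt0 | now apply le_INR].
Qed.

Lemma qn0 J : qn J 0 = 0.
Proof. unfold qn. simpl. ring. Qed.

Lemma qnJ J : (0 < J)%nat -> qn J J = 1.
Proof.
  intros HJ. unfold qn, hh. field. apply not_0_INR. lia.
Qed.

Lemma ip_exact_plus_scal J F G l : (0 < J)%nat ->
  (forall j, continuity (F j)) -> (forall j, continuity (G j)) ->
  ip_exact J (fun j rho => F j rho + l * G j rho) = ip_exact J F + l * ip_exact J G.
Proof.
  intros HJ HF HG. unfold ip_exact. rewrite <- sumj_plus_scal.
  apply sumj_ext. intros j _. apply Rint_plus_scal; auto. apply qn_le; lia.
Qed.

Lemma ip_exact_le J F G : (0 < J)%nat ->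
  (forall j, continuity (F j)) -> (forall j, continuity (G j)) ->
  (forall j rho, (1 <= j <= J)%nat -> qn J (j - 1) < rho < qn J j -> F j rho <= G j rho) ->
  ip_exact J F <= ip_exact J G.
Proof.
  intros HJ HF HG HFG. unfold ip_exact. apply sumj_le. intros j Hj.
  apply Rint_le; auto. apply qn_le; lia.
Qed.

Lemma ip_sharp_ext v J F G : (forall j rho, F j rho = G j rho) ->
  ip_sharp v J F = ip_sharp v J G.
Proof.
  intros HFG. f_equal. do 2 (apply functional_extensionality; intro). apply HFG.
Qed.

Lemma ip_sharp_scal v J F c : (0 < J)%nat -> (forall j, continuity (F j)) ->
  ip_sharp v J (fun j rho => c * F j rho) = c * ip_sharp v J F.
Proof.
  intros HJ HF. destruct v; simpl.
  - unfold ip_lumped.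
    transitivity (hh J / 2 * (c * sumj J (fun j => F j (qn J j) + F j (qn J (j - 1)))));
      [|ring].
    rewrite <- (sumj_scal J _ c). f_equal. apply sumj_ext. intros. ring.
  - unfold ip_exact. rewrite <- sumj_scal.
    apply sumj_ext. intros j _. apply Rint_scal; auto. apply qn_le; lia.
Qed.

Lemma vnorm_sqr u : vnorm u * vnorm u = vdot u u.
Proof.
  unfold vnorm, vdot. apply sqrt_sqrt. nra.
Qed.

Lemma vdot_le_vnorm u w : vdot u w <= vnorm u * vnorm w.
Proof.
  destruct u as [u1 u2], w as [w1 w2]. unfold vnorm, vdot; simpl.
  rewrite <- sqrt_mult by (apply Rplus_le_le_0_compat; apply Rle_0_sqr).
  apply Rle_trans with (Rabs (u1 * w1 + u2 * w2)); [apply Rle_abs|].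
  rewrite <- sqrt_Rsqr_abs. apply sqrt_le_1_alt.
  pose proof (Rle_0_sqr (u1 * w2 - u2 * w1)). unfold Rsqr in *. nra.
Qed.

Lemma vnorm_sub_le a b : vnorm b > 0 ->
  vnorm a - vnorm b <= vdot a (vsub a b) / vnorm b.
Proof.
  intros Hb.
  apply (Rmult_le_reg_r (vnorm b)); [exact Hb|].
  unfold Rdiv. rewrite Rmult_assoc, Rinv_l, Rmult_1_r by lra.
  replace (vdot a (vsub a b)) with (vdot a a - vdot a b)
    by (unfold vdot, vsub; simpl; ring).
  rewrite <- !vnorm_sqr.
  pose proof (vdot_le_vnorm a b). pose proof (Rle_0_sqr (vnorm a - vnorm b)).
  unfold Rsqr in *. nra.
Qed.

Lemma evV_vadd J X Y j rho :
  evV J (fun k => vadd (X k) (Y k)) j rho = vadd (evV J X j rho) (evV J Y j rho).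
Proof. unfold evV, ev, vadd, comp1, comp2; simpl. f_equal; unfold Rdiv; ring. Qed.

Lemma derV_vadd J X Y j :
  derV J (fun k => vadd (X k) (Y k)) j = vadd (derV J X j) (derV J Y j).
Proof. unfold derV, der, vadd, comp1, comp2; simpl. f_equal; unfold Rdiv; ring. Qed.

Ltac continuous_in_rho :=
  intros ? ?; unfold evV, ev, vdot, vscal, vsub, vadd, nuV, vperp; cbn [fst snd]; reg.

Lemma assumptionA_fst_gt0 per bc J X : (0 < J)%nat -> assumptionA per bc J X ->
  forall j rho, (1 <= j <= J)%nat -> qn J (j - 1) < rho < qn J j ->
  fst (evV J X j rho) > 0.
Proof.
  intros HJ [_ HA] j rho Hj Hrho.
  apply HA; [exact Hj | lra |].
  pose proof (qn_le J 0 (j - 1) HJ ltac:(lia)). pose proof (qn_le J j J HJ ltac:(lia)).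
  rewrite qn0 in *. rewrite qnJ in * by exact HJ.
  intros [[] [_ Hp]]; simpl in Hp; lra.
Qed.

Definition area J (X : nat -> Vec) : R :=
  ip_exact J (fun j rho => fst (evV J X j rho) * vnorm (derV J X j)).

Lemma area_increment_le_stiff per bc J Xm dX : (0 < J)%nat -> assumptionA per bc J Xm ->
  let Xnew := fun k => vadd (Xm k) (dX k) in
  area J Xnew - area J Xm <= stiff J Xm Xnew dX.
Proof.
  intros HJ HA Xnew. unfold area, stiff.
  replace (ip_exact J _ - ip_exact J _)
    with (ip_exact J (fun j rho => fst (evV J Xnew j rho) * vnorm (derV J Xnew j)
                                   + (-1) * (fst (evV J Xm j rho) * vnorm (derV J Xm j))))
    by (rewrite ip_exact_plus_scal by (auto; continuous_in_rho); ring).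
  rewrite <- (Rmult_1_l (ip_exact J (fun j rho => fst (evV J Xm j rho) * _ / _))).
  rewrite <- ip_exact_plus_scal by (auto; continuous_in_rho).
  apply ip_exact_le; auto; try continuous_in_rho.
  intros j rho Hj Hrho.
  pose proof (assumptionA_fst_gt0 per bc J Xm HJ HA j rho Hj Hrho) as Hx.
  pose proof (proj1 HA j Hj) as Hb.
  pose proof (vnorm_sub_le (derV J Xnew j) (derV J Xm j) Hb) as Hlen.
  replace (derV J dX j) with (vsub (derV J Xnew j) (derV J Xm j))
    by (unfold Xnew; rewrite derV_vadd; unfold vsub, vadd; destruct (derV J dX j); simpl; f_equal; ring).
  unfold Xnew at 1. rewrite evV_vadd. unfold vadd at 1; cbn [fst].
  unfold Rdiv in *.
  pose proof (Rmult_le_compat_l _ _ _ (Rlt_le _ _ Hx) Hlen).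
  lra.
Qed.

Lemma posp_negp_split r : r = posp r + negp r /\ 0 <= posp r /\ negp r <= 0.
Proof. unfold posp, negp, Rmax. destruct (Rle_dec r 0), (Rle_dec (- r) 0); lra. Qed.

(* [r]_+ a + [r]_- b differentiates the convex part of r x^2 / 2 at the new
   value a and the concave part at the old value b, which bounds the
   increment of r x^2 / 2 from above. *)
Lemma posp_negp_secant_le r a b :
  r * (a ^ 2 - b ^ 2) <= 2 * ((posp r * a + negp r * b) * (a - b)).
Proof.
  destruct (posp_negp_split r) as [Hr [Hp Hn]].
  pose proof (Rle_0_sqr (a - b)). unfold Rsqr in *.
  rewrite Hr at 1. nra.
Qed.

Lemma bsumIn_sub_le per bc k f g h :
  (forall p, inBd per bc k p = true -> f p - g p <= h p) ->
  bsumIn per bc k f - bsumIn per bc k g <= bsumIn per bc k h.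
Proof.
  intros Hfgh. unfold bsumIn, bsum.
  destruct (inBd per bc k false) eqn:Ef, (inBd per bc k true) eqn:Et;
    try pose proof (Hfgh false Ef); try pose proof (Hfgh true Et); lra.
Qed.

Lemma bsumIn_scal per bc k f c :
  bsumIn per bc k (fun p => c * f p) = c * bsumIn per bc k f.
Proof. unfold bsumIn, bsum. destruct (inBd per bc k false), (inBd per bc k true); ring. Qed.

Lemma energy_decrease_of_tested_eq per bc rhat J Xm dX D :
  (0 < J)%nat -> assumptionA per bc J Xm -> inVpart per bc J dX ->
  let Xnew := fun k => vadd (Xm k) (dX k) in
  D + stiff J Xm Xnew dX = Bm per bc rhat J Xm Xnew dX ->
  energy per bc rhat J Xnew + 2 * PI * D <= energy per bc rhat J Xm.
Proof.
  intros HJ HA HdX Xnew Heq.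
  destruct HdX as [_ [HdX1 _]].
  pose proof (area_increment_le_stiff per bc J Xm dX HJ HA) as Harea.
  cbv zeta in Harea. fold Xnew in Harea.
  assert (HB1 : bsumIn per bc Defs.B1 (fun p => rhat p * fst (Xnew (node J p)) * snd (Xnew (node J p)))
              - bsumIn per bc Defs.B1 (fun p => rhat p * fst (Xm (node J p)) * snd (Xm (node J p)))
              <= bsumIn per bc Defs.B1 (fun p => rhat p * fst (Xm (node J p)) * snd (dX (node J p)))).
  { apply bsumIn_sub_le. intros p Hp.
    unfold Xnew, vadd; cbn [fst snd]. rewrite (HdX1 p Hp). lra. }
  assert (HB2 : bsumIn per bc Defs.B2 (fun p => rhat p * fst (Xnew (node J p)) ^ 2)
              - bsumIn per bc Defs.B2 (fun p => rhat p * fst (Xm (node J p)) ^ 2)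
              <= 2 * bsumIn per bc Defs.B2 (fun p =>
                   (posp (rhat p) * fst (Xnew (node J p)) + negp (rhat p) * fst (Xm (node J p)))
                   * fst (dX (node J p)))).
  { rewrite <- bsumIn_scal. apply bsumIn_sub_le. intros p _.
    pose proof (posp_negp_secant_le (rhat p) (fst (Xnew (node J p))) (fst (Xm (node J p)))).
    replace (fst (dX (node J p))) with (fst (Xnew (node J p)) - fst (Xm (node J p)))
      by (unfold Xnew, vadd; simpl; ring).
    lra. }
  unfold Bm in Heq.
  unfold energy. fold (area J Xnew) (area J Xm).
  pose proof PI_RGT_0.
  nra.
Qed.

Lemma energy_decrease_of_scheme v per bc rhat J Xm dX dt A K :
  (0 < J)%nat -> assumptionA per bc J Xm -> inVpart per bc J dX -> dt <> 0 ->
  (forall j, continuity (A j)) ->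
  let Xnew := fun k => vadd (Xm k) (dX k) in
  ip_sharp v J (fun j rho => / dt * A j rho) = ip_sharp v J K ->
  ip_sharp v J A + stiff J Xm Xnew dX = Bm per bc rhat J Xm Xnew dX ->
  energy per bc rhat J Xnew + 2 * PI * dt * ip_sharp v J K <= energy per bc rhat J Xm.
Proof.
  intros HJ HA HdX Hdt HAc Xnew Hvelocity Htested.
  rewrite ip_sharp_scal in Hvelocity by assumption.
  replace (2 * PI * dt * ip_sharp v J K) with (2 * PI * ip_sharp v J A)
    by (rewrite <- Hvelocity; field; exact Hdt).
  exact (energy_decrease_of_tested_eq per bc rhat J Xm dX _ HJ HA HdX Htested).
Qed.

Theorem theorem4p6
  (per : bool) (J : nat) (bc : bool -> BC) (rhat : bool -> R)
  (v : variant) (Xm : nat -> Vec) (dt : R)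
  (HJ : (3 <= J)%nat)
  (Hrhat : forall p : bool, Rabs (rhat p) <= 1)
  (HXm : inV0 per bc J Xm)
  (HA : assumptionA per bc J Xm)
  (Hdt : dt > 0) :
  (* (i) *)
  (forall (dX : nat -> Vec) (kappa : nat -> R),
     let Xnew := fun k => vadd (Xm k) (dX k) in
     inVpart per bc J dX ->
     inWs v per bc J kappa ->
     (forall chi : nat -> R, inWs v per bc J chi ->
        ip_sharp v J (fun j rho =>
          fst (evV J Xm j rho) *
          vdot (vscal (/ dt) (vsub (evV J Xnew j rho) (evV J Xm j rho)))
               (nuV J Xm j) *
          ev J chi j rho * vnorm (derV J Xm j))
        = ip_sharp v J (fun j rho =>
          fst (evV J Xm j rho) * ev J kappa j rho *
          ev J chi j rho * vnorm (derV J Xm j))) ->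
     (forall eta : nat -> Vec, inVpart per bc J eta ->
        ip_sharp v J (fun j rho =>
          fst (evV J Xm j rho) * ev J kappa j rho *
          vdot (nuV J Xm j) (evV J eta j rho) * vnorm (derV J Xm j))
        + stiff J Xm Xnew eta
        = Bm per bc rhat J Xm Xnew eta) ->
     energy per bc rhat J Xnew
     + 2 * PI * dt * ip_sharp v J (fun j rho =>
         fst (evV J Xm j rho) * (ev J kappa j rho) ^ 2 * vnorm (derV J Xm j))
     <= energy per bc rhat J Xm) /\
  (* (ii) *)
  (forall (dX : nat -> Vec) (kappa : nat -> Vec),
     let Xnew := fun k => vadd (Xm k) (dX k) in
     inVpart per bc J dX ->
     inWs v per bc J (comp1 kappa) -> inWs v per bc J (comp2 kappa) ->
     (forall chi : nat -> Vec,
        inWs v per bc J (comp1 chi) -> inWs v per bc J (comp2 chi) ->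
        ip_sharp v J (fun j rho =>
          fst (evV J Xm j rho) *
          vdot (vscal (/ dt) (vsub (evV J Xnew j rho) (evV J Xm j rho)))
               (evV J chi j rho) * vnorm (derV J Xm j))
        = ip_sharp v J (fun j rho =>
          fst (evV J Xm j rho) *
          vdot (evV J kappa j rho) (evV J chi j rho) * vnorm (derV J Xm j))) ->
     (forall eta : nat -> Vec, inVpart per bc J eta ->
        ip_sharp v J (fun j rho =>
          fst (evV J Xm j rho) *
          vdot (evV J kappa j rho) (evV J eta j rho) * vnorm (derV J Xm j))
        + stiff J Xm Xnew eta
        = Bm per bc rhat J Xm Xnew eta) ->
     energy per bc rhat J Xnew
     + 2 * PI * dt * ip_sharp v J (fun j rho =>
         fst (evV J Xm j rho) *
         vdot (evV J kappa j rho) (evV J kappa j rho) * vnorm (derV J Xm j))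
     <= energy per bc rhat J Xm).
Proof.
  assert (HJ0 : (0 < J)%nat) by lia.
  assert (Hdt0 : dt <> 0) by lra.
  split.
  - intros dX kappa Xnew HdX Hkappa Hvelocity Htested.
    apply energy_decrease_of_scheme with (A := fun j rho =>
      fst (evV J Xm j rho) * ev J kappa j rho *
      vdot (nuV J Xm j) (evV J dX j rho) * vnorm (derV J Xm j)); auto.
    + continuous_in_rho.
    + transitivity (ip_sharp v J (fun j rho =>
        fst (evV J Xm j rho) * ev J kappa j rho * ev J kappa j rho * vnorm (derV J Xm j))).
      * rewrite <- (Hvelocity kappa Hkappa). apply ip_sharp_ext. intros j rho.
        unfold Xnew. rewrite evV_vadd. unfold vdot, vscal, vsub, vadd; cbn [fst snd]. ring.
      * apply ip_sharp_ext. intros. ring.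
  - intros dX kappa Xnew HdX Hkappa1 Hkappa2 Hvelocity Htested.
    apply energy_decrease_of_scheme with (A := fun j rho =>
      fst (evV J Xm j rho) *
      vdot (evV J kappa j rho) (evV J dX j rho) * vnorm (derV J Xm j)); auto.
    + continuous_in_rho.
    + rewrite <- (Hvelocity kappa Hkappa1 Hkappa2). apply ip_sharp_ext. intros j rho.
      unfold Xnew. rewrite evV_vadd. unfold vdot, vscal, vsub, vadd; cbn [fst snd]. ring.
Qed.
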